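(* Let $X$ be an infinite set and $X\subseteq Y$. Then the map $\pi:S_\infty(Y)\to I(X)$, $\pi(f)=\widehat f$, is onto if and only if $|X|\le|Y\setminus X|$.
   Context: $S_\infty(Y)$ is the group of all bijections $Y\to Y$. $I(X)$ is the set of all bijections $f:A\to B$ with $A,B\subseteq X$ (including the empty map). For $f\in S_\infty(Y)$, $\widehat f=\{(x,f(x)): x\in X,\ f(x)\in X\}\in I(X)$, i.e. the restriction of $f$ to $X\cap f^{-1}(X)$. *)

From mathcomp Require Import all_boot.
From mathcomp Require Import boolp classical_sets cardinality.
Set Implicit Arguments. Unset Strict Implicit. Unset Printing Implicit Defensive.
Local Open Scope classical_set_scope.

(* An element of I(X): a partial bijection f : A -> B with A, B ⊆ X,
   represented by its graph R (a functional, injective relation whose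
   domain and range lie in X). *)
Definition partial_bij {Y : Type} (X : set Y) (R : Y -> Y -> Prop) : Prop :=
  (forall x y, R x y -> X x /\ X y) /\
  (forall x y1 y2, R x y1 -> R x y2 -> y1 = y2) /\
  (forall x1 x2 y, R x1 y -> R x2 y -> x1 = x2).

Definition fhat {Y : Type} (X : set Y) (f : Y -> Y) : Y -> Y -> Prop :=
  fun x y => X x /\ X (f x) /\ f x = y.

From mathcomp Require Import all_boot.
From mathcomp Require Import boolp classical_sets cardinality functions.
From mathcomp Require Import zify.
Local Open Scope classical_set_scope.
Local Open Scope card_scope.

(* Necessity: a permutation f with empty trace maps X injectively into Y \ X.
   Sufficiency rests on the cardinal identity  2 * |Z| = |Z|  for infinite Z,
   proved from Zorn's lemma: a maximal "doubling graph" (the graph of an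
   injection S x bool -> S, S ⊆ Z) leaves only finitely many points of Z
   uncovered, and those are absorbed with a Hilbert-hotel shift.  Hence
   |Y| = |X| + |Y \ X| = |Y \ X|; fix a bijection phi : Y -> Y \ X.  Given
   R : A -> B, we extend R by a bijection h : Y \ A -> Y \ B sending X \ A
   into Y \ X: h is phi on X \ A, and a bijection from Y \ X onto the rest
   of Y \ B, which again has cardinality |Y \ X|.  Gluing R and h gives a
   permutation whose trace on X is exactly R. *)

Lemma card_le_funP {T} {U : pointedType} (A : set T) (B : set U) :
  A #<= B <-> exists f : T -> U, set_fun A B f /\ set_inj A f.
Proof.
split => [/pcard_leP/injfunPex [f ? ?]|[f [? ?]]]; first by exists f.
by apply/pcard_leP/injfunPex; exists f.
Qed.

Lemma infinite_nat_injP {T : pointedType} (Z : set T) :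
  infinite_set Z -> exists e : nat -> T, (forall n, Z (e n)) /\ injective e.
Proof.
move=> /infiniteP/card_le_funP[e [eZ ei]].
by exists e; split=> [n|m n]; [apply: eZ | apply: ei; rewrite in_setE].
Qed.

(* Hilbert's hotel: an infinite Z admits an injection  shift : Z -> Z  whose
   image misses an infinite sequence  room  of points of Z (shift doubles the
   index along a copy of nat inside Z; room enumerates the odd indices). *)
Lemma hilbert_hotel {T : pointedType} {Z : set T} : infinite_set Z ->
  exists (shift : T -> T) (room : nat -> T),
   [/\ set_fun Z Z shift, set_inj Z shift, (forall n, Z (room n)),
       injective room & (forall z n, Z z -> shift z <> room n)].
Proof.
move=> /infinite_nat_injP[e [eZ einj]].
pose shift z := if pselect (exists n, e n = z) is left ex
  then e (2 * projT1 (cid ex))%N else z.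
have shiftE n : shift (e n) = e (2 * n)%N.
  rewrite /shift; case: pselect => [ex|[]]; last by exists n.
  by case: cid => m /= /einj ->.
have shiftN z : ~ (exists n, e n = z) -> shift z = z.
  by rewrite /shift; case: pselect.
have shift_cases z : (exists n, z = e n /\ shift z = e (2 * n)%N) \/
                     (~ (exists n, e n = z) /\ shift z = z).
  have [[n <-]|nex] := pselect (exists n, e n = z); last by right; rewrite shiftN.
  by left; exists n; rewrite shiftE.
exists shift, (fun n => e (2 * n).+1); split.
- by move=> z Zz; have [[n [_ ->]]|[_ ->]] := shift_cases z.
- move=> z1 z2 _ _; case: (shift_cases z1) => [[n1 [-> ->]]|[nex1 ->]];
    case: (shift_cases z2) => [[n2 [-> ->]]|[nex2 ->]].
  + by move=> /einj eq_n; congr e; lia.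
  + by move=> E; case: nex2; exists (2 * n1)%N.
  + by move=> E; case: nex1; exists (2 * n2)%N.
  + by [].
- by [].
- by move=> m n /einj; lia.
- move=> z n _; case: (shift_cases z) => [[m [_ ->]] /einj|[nz ->] E]; first lia.
  by apply: nz; exists (2 * n).+1.
Qed.

(* A doubling graph in Z is a set G of edges ((a, b), y) which is the graph of
   an injection  S x bool -> S  for some S ⊆ Z, namely S = doubling_dom G. *)
Section doubling_graph.
Context {T : Type} (Z : set T).
Implicit Types (G : set ((T * bool) * T)).

Definition doubling_dom G := [set a | exists y, G ((a, true), y)].

Definition doubling_graph G :=
  [/\ (forall a b y, G ((a, b), y) -> Z a),
      (forall p y1 y2, G (p, y1) -> G (p, y2) -> y1 = y2),
      (forall p1 p2 y, G (p1, y) -> G (p2, y) -> p1 = p2),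
      (forall a b y, G ((a, b), y) -> exists y', G ((a, ~~ b), y')) &
      (forall p a, G (p, a) -> doubling_dom G a)].

Lemma doubling_dom_edge G a b y : doubling_graph G -> G ((a, b), y) ->
  doubling_dom G a.
Proof.
case=> _ _ _ flip _; case: b => Gy; first by exists y.
by have [y' Gy'] := flip _ _ _ Gy; exists y'.
Qed.

Lemma doubling_graph_bigcup (F : set (set ((T * bool) * T))) :
  F `<=` doubling_graph -> total_on F subset ->
  doubling_graph (\bigcup_(G in F) G).
Proof.
move=> Fgood Ftot.
have common G1 G2 : F G1 -> F G2 ->
    exists2 G, F G & G1 `<=` G /\ G2 `<=` G.
  move=> F1 F2; have [S12|S21] := Ftot _ _ F1 F2.
    by exists G2 => //; split.
  by exists G1 => //; split.
split.
- by move=> a b y [G FG Gy]; have [gZ _ _ _ _] := Fgood _ FG; exact: gZ Gy.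
- move=> p y1 y2 [G1 F1 G1y] [G2 F2 G2y]; have [G FG [S1 S2]] := common _ _ F1 F2.
  by have [_ gF _ _ _] := Fgood _ FG; apply: gF (S1 _ G1y) (S2 _ G2y).
- move=> p1 p2 y [G1 F1 G1y] [G2 F2 G2y]; have [G FG [S1 S2]] := common _ _ F1 F2.
  by have [_ _ gI _ _] := Fgood _ FG; apply: gI (S1 _ G1y) (S2 _ G2y).
- move=> a b y [G FG Gy]; have [_ _ _ flip _] := Fgood _ FG.
  by have [y' Gy'] := flip _ _ _ Gy; exists y', G.
- move=> p a [G FG Gy]; have [_ _ _ _ rng] := Fgood _ FG.
  by have [y' Gy'] := rng _ _ Gy; exists y', G.
Qed.

Definition nat_doubling (e : nat -> T) : set ((T * bool) * T) :=
  [set q | exists n (b : bool), q = ((e n, b), e (2 * n + b)%N)].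

Lemma doubling_graph_extend G (e : nat -> T) :
  doubling_graph G -> (forall n, Z (e n) /\ ~ doubling_dom G (e n)) ->
  injective e -> doubling_graph (G `|` nat_doubling e).
Proof.
move=> gG eZ einj; have [gZ gF gI gD gR] := gG.
have e_notin n b y : ~ G ((e n, b), y) by move=> /doubling_dom_edge-/(_ gG) /(eZ n).2.
split.
- move=> a b y [/gZ //|[n [b' [-> _ _]]]]; exact: (eZ n).1.
- move=> p y1 y2 [G1|[n1 [b1 E1]]] [G2|[n2 [b2 E2]]].
  + exact: gF G1 G2.
  + by move: E2 G1 => [-> _] /e_notin.
  + by move: E1 G2 => [-> _] /e_notin.
  + by move: E1 E2 => [-> ->] [/einj -> -> ->].
- have e_notin_ran p n : G (p, e n) -> False.
    by move=> /gR [y] /e_notin.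
  move=> p1 p2 y [G1|[n1 [b1 E1]]] [G2|[n2 [b2 E2]]].
  + exact: gI G1 G2.
  + by move: E2 G1 => [_ ->] /e_notin_ran.
  + by move: E1 G2 => [_ ->] /e_notin_ran.
  + move: E1 E2 => [-> ->] [-> /einj E].
    by have [-> ->] : n1 = n2 /\ b1 = b2 by case: b1 b2 E => [] [] /=; lia.
- move=> a b y [/gD [y' Gy']|[n [b' [-> -> _]]]]; first by exists y'; left.
  by exists (e (2 * n + ~~ b')%N); right; exists n, (~~ b').
- move=> p a [/gR [y Gy]|[n [b [_ ->]]]]; first by exists y; left.
  by exists (e (2 * (2 * n + b)%N + true)%N); right; exists (2 * n + b)%N, true.
Qed.
End doubling_graph.

(* Zorn: a maximal doubling graph leaves only finitely many points of Z
   outside its domain, otherwise it could be extended. *)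
Lemma maximal_doubling_graph {T : pointedType} (Z : set T) :
  exists2 G, doubling_graph Z G & finite_set (Z `\` doubling_dom G).
Proof.
have [G [gG Gmax]] := Zorn_bigcup (@doubling_graph_bigcup _ Z).
exists G => //; apply: contrapT => /infinite_nat_injP [e [eZ einj]].
have eNdom n : Z (e n) /\ ~ doubling_dom G (e n) by have [] := eZ n.
apply: (Gmax (G `|` nat_doubling e)); last exact: doubling_graph_extend.
split; first exact: subsetUl.
have new : (G `|` nat_doubling e) ((e 0, true), e 1) by right; exists 0%N, true.
by move=> /(_ _ new) Gnew; apply: (eNdom 0%N).2; exists (e 1).
Qed.

Lemma doubling_graph_card_le {T : pointedType} {Z : set T} {G} :
  doubling_graph Z G -> doubling_dom G `*` [set: bool] #<= doubling_dom G.
Proof.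
move=> [_ _ gI gD gR].
pose g p := [get y : T | G (p, y)].
have Gg p : (doubling_dom G `*` [set: bool]) p -> G (p, g p).
  case: p => a b /= [[y Gy] _]; apply: (getPex (P := fun y => G ((a, b), y))).
  by case: b; [exists y | have := gD _ _ _ Gy].
apply/card_le_funP; exists g; split.
  by move=> p /Gg /gR.
move=> p1 p2; rewrite !in_setE => /Gg G1 /Gg G2 E.
by apply: gI G1 _; rewrite E.
Qed.

(* 2|Z| <= |Z| for infinite Z: shift the image of the maximal doubling graph
   off the rooms, and send the finite remainder (times bool) into the rooms. *)
Lemma infinite_card_double_le {T : pointedType} (Z : set T) :
  infinite_set Z -> Z `*` [set: bool] #<= Z.
Proof.
move=> Zinf.
have [shift [room [shiftZ shiftI roomZ roomI shift_room]]] := hilbert_hotel Zinf.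
have [G gG finF] := maximal_doubling_graph Z.
set S := doubling_dom G in finF.
have SZ : S `<=` Z by move=> a [y]; case: gG => gZ _ _ _ _ /gZ.
have /card_le_funP [g [gS gI]] := doubling_graph_card_le gG.
have /card_le_funP [c [_ cI]] : countable ((Z `\` S) `*` [set: bool]).
  exact/finite_set_countable/finite_setX.
pose k p := if pselect (S p.1) then shift (g p) else room (c p).
apply/card_le_funP; exists k; split.
  move=> [a b] [/= Za _]; rewrite /k /=.
  by case: pselect => Sa /=; [exact/shiftZ/SZ/gS | exact: roomZ].
move=> [a1 b1] [a2 b2]; rewrite !in_setE => -[/= Z1 _] [/= Z2 _].
rewrite /k /=; case: pselect => S1; case: pselect => S2 /=.
- have gZ a b : S a -> Z (g (a, b)) by move=> Sa; apply/SZ/gS.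
  move=> /shiftI; rewrite !in_setE => /(_ (gZ _ _ S1) (gZ _ _ S2)).
  by apply: gI; rewrite in_setE.
- by move=> /shift_room; case; apply/SZ/gS.
- by move=> /esym /shift_room; case; apply/SZ/gS.
- by move=> /roomI /cI; apply; rewrite in_setE.
Qed.

Lemma card_setU_absorb {T : pointedType} (A B : set T) :
  A #<= B -> infinite_set B -> A `|` B #<= B.
Proof.
move=> /card_le_funP[g [gB gI]] /infinite_card_double_le/card_le_funP[k [kB kI]].
have kI' p q : B p.1 -> B q.1 -> k p = k q -> p = q.
  by move=> Bp Bq; apply: kI; rewrite in_setE.
apply/card_le_funP.
exists (fun t => if pselect (A t) then k (g t, true) else k (t, false)); split.
  move=> t ABt; case: pselect => At; apply: kB; split=> //=; first exact: gB.
  by case: ABt.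
move=> s t; rewrite !in_setE => ABs ABt.
have inB u : A u \/ B u -> ~ A u -> B u by case.
case: pselect => As; case: pselect => At /kI' => /(_ _ _) E.
- by case: (E (gB _ As) (gB _ At)) => /gI; rewrite !in_setE; apply.
- by case: (E (gB _ As) (inB _ ABt At)).
- by case: (E (inB _ ABs As) (gB _ At)).
- by case: (E (inB _ ABs As) (inB _ ABt At)).
Qed.

Lemma card_setT_compl {T : pointedType} {X : set T} :
  infinite_set X -> X #<= ~` X -> [set: T] #= ~` X.
Proof.
move=> Xinf XZ; have Zinf : infinite_set (~` X).
  by move=> Zfin; apply/Xinf/(card_le_finite XZ).
apply/card_eqPle; split; last exact: card_leT.
by rewrite -(setUv X); apply: card_setU_absorb.
Qed.

Lemma set_bij_patch {aT rT : Type} {A C : set aT} {B D : set rT} {f g : aT -> rT} :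
  set_bij A B f -> set_bij C D g -> A `&` C = set0 -> B `&` D = set0 ->
  set_bij (A `|` C) (B `|` D) (patch g A f).
Proof.
move=> [fAB fI fS] [gCD gI gS] AC BD.
have notAC x : A x -> C x -> False.
  by move=> Ax Cx; have : (A `&` C) x by []; rewrite AC.
have notBD y : B y -> D y -> False.
  by move=> By Dy; have : (B `&` D) y by []; rewrite BD.
have pA x : A x -> patch g A f x = f x by move=> Ax; rewrite patchT ?in_setE.
have pC x : C x -> patch g A f x = g x.
  by move=> Cx; rewrite patchC // in_setE => /notAC; apply.
split.
- move=> x [Ax|Cx]; first by left; rewrite pA //; apply: fAB.
  by right; rewrite pC //; apply: gCD.
- move=> x1 x2; rewrite !in_setE => -[A1|C1] [A2|C2].
  + by rewrite !pA //; apply: fI; rewrite in_setE.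
  + rewrite pA // pC // => E; case: (notBD (f x1)); first exact: fAB.
    by rewrite E; exact: gCD.
  + rewrite pC // pA // => E; case: (notBD (f x2)); first exact: fAB.
    by rewrite -E; exact: gCD.
  + by rewrite !pC //; apply: gI; rewrite in_setE.
- move=> y [/fS[x Ax <-]|/gS[x Cx <-]].
  + by exists x; [left | rewrite pA].
  + by exists x; [right | rewrite pC].
Qed.

Section relation_graph.
Context {T : pointedType}.
Implicit Types R : T -> T -> Prop.

Definition rel_dom R := [set x | exists y, R x y].
Definition rel_ran R := [set y | exists x, R x y].
Definition rel_fun R x := [get y : T | R x y].

Lemma rel_funP {R x} : rel_dom R x -> R x (rel_fun R x).
Proof. exact: (getPex (P := R x)). Qed.

Lemma partial_bij_set_bij {X : set T} {R} : partial_bij X R ->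
  set_bij (rel_dom R) (rel_ran R) (rel_fun R).
Proof.
move=> [_ [Rf Ri]]; split.
- by move=> x /rel_funP Rx; exists x.
- move=> x1 x2; rewrite !in_setE => /rel_funP R1 /rel_funP R2 E.
  by apply: Ri R1 _; rewrite E.
- move=> y [x Rxy]; have Dx : rel_dom R x by exists y.
  by exists x => //; exact: Rf _ _ _ (rel_funP Dx) Rxy.
Qed.

End relation_graph.

(* Given phi : Y ~ Y \ X and A, B ⊆ X, there is a bijection
   h : Y \ A -> Y \ B sending X \ A out of X: h = phi on X \ A, while Y \ X
   is mapped onto the rest  T' = (X \ B) ∪ phi(Y \ (X \ A))  of Y \ B,
   which has the cardinality of Y \ X since it contains phi(Y \ X). *)
Lemma off_domain_bij {T : pointedType} {X A B : set T} {phi : T -> T} :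
  set_bij [set: T] (~` X) phi -> A `<=` X -> B `<=` X ->
  exists h, set_bij (~` A) (~` B) h /\ forall x, X x -> ~ A x -> ~ X (h x).
Proof.
move=> [phiZ phiI phiS] AX BX.
have phiI' s t : phi s = phi t -> s = t by apply: phiI; rewrite in_setE.
have phiI_in (U : set T) : {in U &, injective phi} by move=> s t _ _; apply: phiI'.
have cover x : (X `\` A) x \/ (~` X `|` A) x.
  have [Ax|nAx] := pselect (A x); first by right; right.
  by have [Xx|nXx] := pselect (X x); [left | right; left].
pose W := phi @` (X `\` A).
pose T' := (X `\` B) `|` phi @` (~` X `|` A).
have Z_T' : ~` X #= T'.
  apply/card_eqPle; split.
    rewrite -(card_le_eql (inj_card_eq (phiI_in (~` X)))).
    by apply: subset_card_le => y [x Zx <-]; right; exists x => //; left.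
  have /card_eqPle[TZ _] : [set: T] #= ~` X by apply/card_set_bijP; exists phi.
  exact: card_le_trans (card_leT T') TZ.
have /card_set_bijP [psi psi_bij] := Z_T'.
have dom_split : ~` A = (X `\` A) `|` ~` X.
  apply/seteqP; split => x; last by case=> [[]|Zx /AX].
  by have [Xx|] := pselect (X x); [left | right].
have ran_split : ~` B = W `|` T'.
  apply/seteqP; split => y; last first.
    by case=> [[x _ <-]|[[]//|[x _ <-]]] /BX; apply: phiZ.
  move=> nBy; have [Xy|/phiS[x _ <-]] := pselect (X y); first by right; left.
  by case: (cover x) => [XAx|ZAx]; [left | right; right]; exists x.
exists (patch psi (X `\` A) phi); split.
  rewrite dom_split ran_split; apply: set_bij_patch => //; first exact: inj_bij.
    by rewrite -subset0 => x [[]].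
  rewrite -subset0 => _ [[x [Xx nAx] <-]] [[Xphix _]|[x' ZAx' /phiI' Ex']].
    by have := phiZ x I.
  by move: ZAx'; rewrite Ex' => -[/(_ Xx)|/nAx].
by move=> x Xx nAx; rewrite patchT ?in_setE //; apply: phiZ.
Qed.

(* Sufficiency: glue R on its domain with the bijection h off it. *)
Lemma extend_partial_bij {T : pointedType} (X : set T) :
  infinite_set X -> X #<= ~` X ->
  forall R, partial_bij X R -> exists f, bijective f /\ fhat X f = R.
Proof.
move=> Xinf XZ R RX; have [Rsub [Rf _]] := RX.
have /card_set_bijP [phi phi_bij] := card_setT_compl Xinf XZ.
have domX : rel_dom R `<=` X by move=> x [y /Rsub[]].
have ranX : rel_ran R `<=` X by move=> y [x /Rsub[]].
have [h [h_bij h_out]] := off_domain_bij phi_bij domX ranX.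
pose f := patch h (rel_dom R) (rel_fun R).
exists f; split.
  have := set_bij_patch (partial_bij_set_bij RX) h_bij (setICr _) (setICr _).
  by rewrite !setUv setTT_bijective.
apply/funext => x; apply/funext => y; apply/propext; rewrite /fhat /f.
have [Dx|nDx] := pselect (rel_dom R x).
  rewrite patchT ?in_setE //; split=> [[_ [_ <-]]|Rxy]; first exact: rel_funP.
  by have [Xx Xy] := Rsub _ _ Rxy; rewrite (Rf _ _ _ (rel_funP Dx) Rxy).
rewrite patchC ?in_setE //; split=> [[Xx [/(h_out _ Xx nDx) []]]|Rxy].
by case: nDx; exists y.
Qed.

Lemma fhat_empty_card_le {T : pointedType} (X : set T) f :
  bijective f -> fhat X f = (fun _ _ => False) -> X #<= ~` X.
Proof.
move=> fbij fE; apply/card_le_funP; exists f; split.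
  by move=> x Xx Xfx; have : fhat X f x (f x) by []; rewrite fE.
by move=> x y _ _; apply: bij_inj.
Qed.

Theorem proposition6p1 (Y : Type) (X : set Y) :
  infinite_set X ->
  ((forall R : Y -> Y -> Prop, partial_bij X R ->
      exists f : Y -> Y, bijective f /\ fhat X f = R)
   <-> (X #<= ~` X)).
Proof.
elim/Ppointed: Y X => Y X Xinf.
  by case: Xinf; rewrite (empty_eq0 X); exact: finite_set0.
split; last exact: extend_partial_bij.
move=> onto; have [|f [fbij fE]] := onto (fun _ _ => False).
  by split; [|split] => ? ? ?.
exact: fhat_empty_card_le fbij fE.
Qed.
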